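(* Let $S$ be an ample semigroup. Then $S$ has a semigroup of left I-quotients $Q$ such that $S$ is a bi-unary subsemigroup of $Q$ (that is, $a^+=aa^{-1}$ and $a^*=a^{-1}a$ in $Q$ for all $a\in S$) if and only if for all $b,c\in S$ there exist $u,v\in S$ such that \[ub=vc,\qquad u^+=v^+=(vc)^+,\qquad bc^*=u^*b.\]
   Context: For an element $a$ of an inverse semigroup $Q$, $a^{-1}$ is its unique inverse. A subsemigroup $S$ of an inverse semigroup $Q$ is a left I-order in $Q$ (and $Q$ a semigroup of left I-quotients of $S$) if every $q\in Q$ can be written $q=a^{-1}b$ with $a,b\in S$. On a semigroup $S$: $a\,\mathcal{R}^*\,b$ iff for all $x,y\in S^1$, $xa=ya\Leftrightarrow xb=yb$; $a\,\mathcal{L}^*\,b$ iff for all $x,y\in S^1$, $ax=ay\Leftrightarrow bx=by$. $S$ is left adequate if $E(S)$ is a semilattice and every $a$ is $\mathcal{R}^*$-related to a (unique) idempotent $a^+$; right adequate dually with $\mathcal{L}^*$ and $a^*$. $S$ is left ample if left adequate and $ab^+=(ab)^+a$ for all $a,b$; right ample if right adequate and $b^*a=a(ba)^*$ for all $a,b$; ample if both left and right ample. *)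

Set Implicit Arguments.

Section Semigroups.
Variable S : Type.
Variable mul : S -> S -> S.

Definition associative_op : Prop :=
  forall a b c, mul a (mul b c) = mul (mul a b) c.

Definition idempotent (e : S) : Prop := mul e e = e.

(* left / right action of an element of S^1 = option S (None = adjoined 1) *)
Definition lact (x : option S) (a : S) : S :=
  match x with None => a | Some x' => mul x' a end.
Definition ract (a : S) (x : option S) : S :=
  match x with None => a | Some x' => mul a x' end.

Definition Rstar (a b : S) : Prop :=
  forall x y : option S, lact x a = lact y a <-> lact x b = lact y b.
Definition Lstar (a b : S) : Prop :=
  forall x y : option S, ract a x = ract a y <-> ract b x = ract b y.

Definition idempotents_semilattice : Prop :=
  forall e f, idempotent e -> idempotent f ->
    idempotent (mul e f) /\ mul e f = mul f e.

Definition left_adequate (plus : S -> S) : Prop :=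
  associative_op /\ idempotents_semilattice /\
  (forall a, idempotent (plus a) /\ Rstar a (plus a)) /\
  (forall a e, idempotent e -> Rstar a e -> e = plus a).

Definition right_adequate (star : S -> S) : Prop :=
  associative_op /\ idempotents_semilattice /\
  (forall a, idempotent (star a) /\ Lstar a (star a)) /\
  (forall a e, idempotent e -> Lstar a e -> e = star a).

Definition left_ample (plus : S -> S) : Prop :=
  left_adequate plus /\ forall a b, mul a (plus b) = mul (plus (mul a b)) a.

Definition right_ample (star : S -> S) : Prop :=
  right_adequate star /\ forall a b, mul (star b) a = mul a (star (mul b a)).

Definition ample (plus star : S -> S) : Prop :=
  left_ample plus /\ right_ample star.

Definition is_inverse (a b : S) : Prop :=
  mul (mul a b) a = a /\ mul (mul b a) b = b.

Definition inverse_semigroup (inv : S -> S) : Prop :=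
  associative_op /\
  (forall a, is_inverse a (inv a)) /\
  (forall a b, is_inverse a b -> b = inv a).

End Semigroups.

Definition has_biunary_left_Iquotients (S : Type) (mul : S -> S -> S)
  (plus star : S -> S) : Prop :=
  exists (Q : Type) (mulQ : Q -> Q -> Q) (invQ : Q -> Q) (f : S -> Q),
    inverse_semigroup mulQ invQ /\
    (forall a b, f a = f b -> a = b) /\
    (forall a b, f (mul a b) = mulQ (f a) (f b)) /\
    (forall q : Q, exists a b : S, q = mulQ (invQ (f a)) (f b)) /\
    (forall a : S, f (plus a) = mulQ (f a) (invQ (f a))) /\
    (forall a : S, f (star a) = mulQ (invQ (f a)) (f a)).

(* Necessity holds in any inverse semigroup: writing b c⁻¹ = a⁻¹d with a, d in S,
   the elements u = d⁺a and v = a⁺d satisfy u⁻¹v = a⁻¹d and uu⁻¹ = vv⁻¹, and the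
   required identities follow.
   For sufficiency the condition is a left Ore condition for formal fractions a⁻¹b
   (pairs with a⁺ = b⁺): it lets one define (a⁻¹b)(c⁻¹d) = (ua)⁻¹(vd) whenever
   ub = vc, u⁺ = v⁺ = (vc)⁺ and bc∗ = u∗b. The fractions a⁻¹b and c⁻¹d are
   identified when a∗ = c∗ and xa = yc implies xb = yd. The star of a numerator ua
   is the idempotent ((bc∗)⁺a)∗, which stands for the conjugate (a⁻¹b)c∗(a⁻¹b)⁻¹;
   the ample laws make these conjugates compose, which gives associativity. The
   quotient is a regular semigroup whose idempotents are the diagonal fractions
   a⁻¹a; they commute, so it is inverse, and a ↦ (a⁺)⁻¹a embeds S in it as a
   bi-unary left I-order. *)

From Stdlib Require Import Setoid ssreflect.
From Stdlib Require Import FunctionalExtensionality PropExtensionality ProofIrrelevance IndefiniteDescription.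

Set Implicit Arguments.
Unset Strict Implicit.

Section InverseSemigroup.
Variables (T : Type) (mul : T -> T -> T) (inv : T -> T).
Hypothesis Tinv : inverse_semigroup mul inv.
Local Notation "x ⋅ y" := (mul x y) (at level 40, left associativity).

Lemma isg_mulA x y z : x ⋅ (y ⋅ z) = x ⋅ y ⋅ z.
Proof. by case: Tinv. Qed.

Lemma mul_inv_mul x : x ⋅ inv x ⋅ x = x.
Proof. by case: Tinv => _ [/(_ x) []]. Qed.

Lemma inv_mul_inv x : inv x ⋅ x ⋅ inv x = inv x.
Proof. by case: Tinv => _ [/(_ x) []]. Qed.

Lemma inv_uniq x y : x ⋅ y ⋅ x = x -> y ⋅ x ⋅ y = y -> y = inv x.
Proof. by case: Tinv => _ [_ uniq] *; apply: uniq. Qed.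

Lemma invK x : inv (inv x) = x.
Proof. by symmetry; apply: inv_uniq; [apply: inv_mul_inv | apply: mul_inv_mul]. Qed.

Lemma inv_idem e : idempotent mul e -> inv e = e.
Proof. by move=> ee; symmetry; apply: inv_uniq; rewrite ee. Qed.

Lemma mul_inv_idem x : idempotent mul (x ⋅ inv x).
Proof. by rewrite /idempotent isg_mulA mul_inv_mul. Qed.

Lemma inv_mul_idem x : idempotent mul (inv x ⋅ x).
Proof. by rewrite /idempotent isg_mulA inv_mul_inv. Qed.

Lemma isg_idem_mul e f : idempotent mul e -> idempotent mul f -> idempotent mul (e ⋅ f).
Proof.
move=> ee ff.
(* (ef)⁻¹ = f (ef)⁻¹ e, hence (ef)⁻¹ is idempotent and so equal to its inverse ef. *)
have fxe : f ⋅ inv (e ⋅ f) ⋅ e = inv (e ⋅ f).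
{ apply: inv_uniq.
  - have -> : e ⋅ f ⋅ (f ⋅ inv (e ⋅ f) ⋅ e) ⋅ (e ⋅ f)
            = e ⋅ (f ⋅ f) ⋅ inv (e ⋅ f) ⋅ (e ⋅ e) ⋅ f by rewrite !isg_mulA.
    by rewrite ee ff -isg_mulA mul_inv_mul.
  - have -> : f ⋅ inv (e ⋅ f) ⋅ e ⋅ (e ⋅ f) ⋅ (f ⋅ inv (e ⋅ f) ⋅ e)
            = f ⋅ (inv (e ⋅ f) ⋅ (e ⋅ e) ⋅ (f ⋅ f) ⋅ inv (e ⋅ f)) ⋅ e by rewrite !isg_mulA.
    by rewrite ee ff -(isg_mulA _ e f) inv_mul_inv. }
have idem_x : idempotent mul (inv (e ⋅ f)).
  rewrite /idempotent -{1 2}fxe.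
  have -> : f ⋅ inv (e ⋅ f) ⋅ e ⋅ (f ⋅ inv (e ⋅ f) ⋅ e)
          = f ⋅ (inv (e ⋅ f) ⋅ (e ⋅ f) ⋅ inv (e ⋅ f)) ⋅ e by rewrite !isg_mulA.
  by rewrite inv_mul_inv fxe.
by rewrite -(invK (e ⋅ f)) inv_idem.
Qed.

Lemma isg_idem_comm e f : idempotent mul e -> idempotent mul f -> e ⋅ f = f ⋅ e.
Proof.
move=> ee ff; have ef := isg_idem_mul ee ff; have fe := isg_idem_mul ff ee.
rewrite -{1}(inv_idem ef); symmetry; apply: inv_uniq.
- have -> : e ⋅ f ⋅ (f ⋅ e) ⋅ (e ⋅ f) = e ⋅ (f ⋅ f) ⋅ (e ⋅ e) ⋅ f by rewrite !isg_mulA.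
  by rewrite ee ff -isg_mulA ef.
- have -> : f ⋅ e ⋅ (e ⋅ f) ⋅ (f ⋅ e) = f ⋅ (e ⋅ e) ⋅ (f ⋅ f) ⋅ e by rewrite !isg_mulA.
  by rewrite ee ff -isg_mulA fe.
Qed.

Lemma inv_mul x y : inv (x ⋅ y) = inv y ⋅ inv x.
Proof.
symmetry; apply: inv_uniq.
- have -> : x ⋅ y ⋅ (inv y ⋅ inv x) ⋅ (x ⋅ y) = x ⋅ ((y ⋅ inv y) ⋅ (inv x ⋅ x)) ⋅ y
    by rewrite !isg_mulA.
  rewrite (isg_idem_comm (mul_inv_idem y) (inv_mul_idem x)).
  have -> : x ⋅ (inv x ⋅ x ⋅ (y ⋅ inv y)) ⋅ y = (x ⋅ inv x ⋅ x) ⋅ (y ⋅ inv y ⋅ y)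
    by rewrite !isg_mulA.
  by rewrite !mul_inv_mul.
- have -> : inv y ⋅ inv x ⋅ (x ⋅ y) ⋅ (inv y ⋅ inv x)
          = inv y ⋅ ((inv x ⋅ x) ⋅ (y ⋅ inv y)) ⋅ inv x by rewrite !isg_mulA.
  rewrite (isg_idem_comm (inv_mul_idem x) (mul_inv_idem y)).
  have -> : inv y ⋅ (y ⋅ inv y ⋅ (inv x ⋅ x)) ⋅ inv x
          = (inv y ⋅ y ⋅ inv y) ⋅ (inv x ⋅ x ⋅ inv x) by rewrite !isg_mulA.
  by rewrite !inv_mul_inv.
Qed.

Lemma inv_fraction_mul u v : inv (inv u ⋅ v) = inv v ⋅ u.
Proof. by rewrite inv_mul invK. Qed.

Lemma balanced_fraction a d :
  inv (d ⋅ inv d ⋅ a) ⋅ (a ⋅ inv a ⋅ d) = inv a ⋅ d /\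
  d ⋅ inv d ⋅ a ⋅ inv (d ⋅ inv d ⋅ a) = a ⋅ inv a ⋅ d ⋅ inv (a ⋅ inv a ⋅ d).
Proof.
have da := isg_idem_comm (mul_inv_idem d) (mul_inv_idem a).
rewrite (inv_mul (d ⋅ inv d)) (inv_mul (a ⋅ inv a)) !(inv_idem (mul_inv_idem _)); split.
- have -> : inv a ⋅ (d ⋅ inv d) ⋅ (a ⋅ inv a ⋅ d) = inv a ⋅ (d ⋅ inv d ⋅ (a ⋅ inv a)) ⋅ d
    by rewrite !isg_mulA.
  rewrite da.
  have -> : inv a ⋅ (a ⋅ inv a ⋅ (d ⋅ inv d)) ⋅ d = (inv a ⋅ a ⋅ inv a) ⋅ (d ⋅ inv d ⋅ d)
    by rewrite !isg_mulA.
  by rewrite inv_mul_inv mul_inv_mul.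
- have -> : d ⋅ inv d ⋅ a ⋅ (inv a ⋅ (d ⋅ inv d)) = d ⋅ inv d ⋅ (a ⋅ inv a) ⋅ (d ⋅ inv d)
    by rewrite !isg_mulA.
  have -> : a ⋅ inv a ⋅ d ⋅ (inv d ⋅ (a ⋅ inv a)) = a ⋅ inv a ⋅ (d ⋅ inv d) ⋅ (a ⋅ inv a)
    by rewrite !isg_mulA.
  have l : d ⋅ inv d ⋅ (a ⋅ inv a) ⋅ (d ⋅ inv d) = a ⋅ inv a ⋅ (d ⋅ inv d)
    by rewrite da -isg_mulA (mul_inv_idem d).
  have r : a ⋅ inv a ⋅ (d ⋅ inv d) ⋅ (a ⋅ inv a) = a ⋅ inv a ⋅ (d ⋅ inv d)
    by rewrite -da -isg_mulA (mul_inv_idem a).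
  by rewrite l r.
Qed.

Lemma ore_pair_of_fraction u v b c :
  inv u ⋅ v = b ⋅ inv c -> u ⋅ inv u = v ⋅ inv v ->
  u ⋅ b = v ⋅ c /\ v ⋅ inv v = v ⋅ c ⋅ inv (v ⋅ c) /\ b ⋅ (inv c ⋅ c) = inv u ⋅ u ⋅ b.
Proof.
move=> uv_bc uu_vv.
have uu : inv u ⋅ u = b ⋅ inv c ⋅ (c ⋅ inv b).
{ have -> : inv u ⋅ u = inv u ⋅ v ⋅ inv (inv u ⋅ v).
  { rewrite inv_fraction_mul.
    have -> : inv u ⋅ v ⋅ (inv v ⋅ u) = inv u ⋅ (v ⋅ inv v) ⋅ u by rewrite !isg_mulA.
    by rewrite -uu_vv isg_mulA inv_mul_inv. }
  by rewrite uv_bc inv_mul invK. }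
have vv : inv v ⋅ v = c ⋅ inv b ⋅ (b ⋅ inv c).
{ have -> : inv v ⋅ v = inv (inv u ⋅ v) ⋅ (inv u ⋅ v).
  { rewrite inv_fraction_mul.
    have -> : inv v ⋅ u ⋅ (inv u ⋅ v) = inv v ⋅ (u ⋅ inv u) ⋅ v by rewrite !isg_mulA.
    by rewrite uu_vv isg_mulA inv_mul_inv. }
  by rewrite uv_bc inv_mul invK. }
have b_cc : b ⋅ (inv c ⋅ c) = inv u ⋅ u ⋅ b.
{ rewrite uu.
  have -> : b ⋅ inv c ⋅ (c ⋅ inv b) ⋅ b = b ⋅ (inv c ⋅ c ⋅ (inv b ⋅ b)) by rewrite !isg_mulA.
  by rewrite (isg_idem_comm (inv_mul_idem c) (inv_mul_idem b)) !isg_mulA mul_inv_mul. }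
split; last split=> //.
- have -> : u ⋅ b = u ⋅ (inv u ⋅ u ⋅ b) by rewrite !isg_mulA mul_inv_mul.
  rewrite -b_cc.
  have -> : u ⋅ (b ⋅ (inv c ⋅ c)) = u ⋅ (b ⋅ inv c) ⋅ c by rewrite !isg_mulA.
  by rewrite -uv_bc isg_mulA uu_vv mul_inv_mul.
- rewrite inv_mul.
  have -> : v ⋅ c ⋅ (inv c ⋅ inv v) = v ⋅ (inv v ⋅ v ⋅ (c ⋅ inv c)) ⋅ inv v
    by rewrite !isg_mulA mul_inv_mul.
  have -> : inv v ⋅ v ⋅ (c ⋅ inv c) = inv v ⋅ v.
  { rewrite vv.
    have -> : c ⋅ inv b ⋅ (b ⋅ inv c) ⋅ (c ⋅ inv c) = c ⋅ inv b ⋅ b ⋅ (inv c ⋅ c ⋅ inv c)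
      by rewrite !isg_mulA.
    by rewrite inv_mul_inv !isg_mulA. }
  by rewrite isg_mulA mul_inv_mul.
Qed.
End InverseSemigroup.

Section RegularSemigroup.
Variables (T : Type) (mul : T -> T -> T) (inv : T -> T).
Local Notation "x ⋅ y" := (mul x y) (at level 40, left associativity).

Lemma inverse_semigroup_of_idem_comm :
  associative_op mul -> (forall x, is_inverse mul x (inv x)) ->
  (forall e f, idempotent mul e -> idempotent mul f -> e ⋅ f = f ⋅ e) ->
  inverse_semigroup mul inv.
Proof.
move=> mulA inv_spec idem_comm; split=> //; split=> // x y [xyx yxy].
have [xix ixi] := inv_spec x.
have idem_yx : idempotent mul (y ⋅ x) by rewrite /idempotent mulA yxy.
have idem_xy : idempotent mul (x ⋅ y) by rewrite /idempotent mulA xyx.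
have idem_ixx : idempotent mul (inv x ⋅ x) by rewrite /idempotent mulA ixi.
have idem_xix : idempotent mul (x ⋅ inv x) by rewrite /idempotent mulA xix.
have -> : y = inv x ⋅ x ⋅ y.
{ rewrite -{1}yxy -{1}xix.
  have -> : y ⋅ (x ⋅ inv x ⋅ x) ⋅ y = y ⋅ x ⋅ (inv x ⋅ x) ⋅ y by rewrite !mulA.
  by rewrite (idem_comm _ _ idem_yx idem_ixx) -mulA yxy. }
rewrite -{2}ixi.
have -> : inv x ⋅ x ⋅ inv x = inv x ⋅ (x ⋅ y ⋅ (x ⋅ inv x))
  by rewrite (mulA (x ⋅ y)) xyx !mulA.
by rewrite (idem_comm _ _ idem_xy idem_xix) !mulA ixi.
Qed.
End RegularSemigroup.

Section PerQuotient.
Variables (X : Type) (R : X -> X -> Prop).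
Hypotheses (R_sym : forall x y, R x y -> R y x)
           (R_trans : forall x y z, R x y -> R y z -> R x z).

Definition per_quot := {C : X -> Prop | exists x, R x x /\ C = R x}.

Definition pclass x (Rxx : R x x) : per_quot :=
  exist _ (R x) (ex_intro _ x (conj Rxx eq_refl)).

Lemma pclass_eq x y (Rxx : R x x) (Ryy : R y y) : R x y -> pclass Rxx = pclass Ryy.
Proof.
move=> Rxy; apply: subset_eq_compat; apply: functional_extensionality => z.
by apply: propositional_extensionality; split; eauto.
Qed.

Lemma pclass_inj x y (Rxx : R x x) (Ryy : R y y) : pclass Rxx = pclass Ryy -> R x y.
Proof. by move/(f_equal (@proj1_sig _ _)) => /= ->. Qed.

Lemma pclass_surj q : exists x (Rxx : R x x), q = pclass Rxx.
Proof.
case: q => C [x [Rxx eC]]; exists x, Rxx.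
exact: subset_eq_compat.
Qed.

Definition prepr (q : per_quot) : X :=
  proj1_sig (constructive_indefinite_description _ (proj2_sig q)).

Lemma prepr_spec q : R (prepr q) (prepr q) /\ proj1_sig q = R (prepr q).
Proof. exact: proj2_sig (constructive_indefinite_description _ (proj2_sig q)). Qed.

Lemma prepr_pclass x (Rxx : R x x) : R (prepr (pclass Rxx)) x.
Proof. by case: (prepr_spec (pclass Rxx)) => _ /= <-. Qed.

Section Lift.
Variables (f : X -> X) (op : X -> X -> X).
Hypothesis f_compat : forall x y, R x y -> R (f x) (f y).
Hypothesis op_compat : forall x x' y y', R x x' -> R y y' -> R (op x y) (op x' y').

Definition quot_lift1 (q : per_quot) : per_quot :=
  pclass (f_compat (proj1 (prepr_spec q))).

Definition quot_lift2 (q r : per_quot) : per_quot :=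
  pclass (op_compat (proj1 (prepr_spec q)) (proj1 (prepr_spec r))).

Lemma quot_lift1_pclass x (Rxx : R x x) : quot_lift1 (pclass Rxx) = pclass (f_compat Rxx).
Proof. by apply: pclass_eq; apply: f_compat; apply: prepr_pclass. Qed.

Lemma quot_lift2_pclass x y (Rxx : R x x) (Ryy : R y y) :
  quot_lift2 (pclass Rxx) (pclass Ryy) = pclass (op_compat Rxx Ryy).
Proof. by apply: pclass_eq; apply: op_compat; apply: prepr_pclass. Qed.
End Lift.
End PerQuotient.

Section Ample.
Variables (S : Type) (mul : S -> S -> S) (plus star : S -> S).
Hypothesis S_ample : ample mul plus star.
Local Notation "x ⋅ y" := (mul x y) (at level 40, left associativity).

Lemma mulA a b c : a ⋅ (b ⋅ c) = a ⋅ b ⋅ c.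
Proof. by case: S_ample => [[[]]]. Qed.

Lemma idem_comm e f : idempotent mul e -> idempotent mul f -> e ⋅ f = f ⋅ e.
Proof. by case: S_ample => [[[_ [sl _]] _] _] ee ff; case: (sl e f ee ff). Qed.

Lemma idem_mul e f : idempotent mul e -> idempotent mul f -> idempotent mul (e ⋅ f).
Proof. by case: S_ample => [[[_ [sl _]] _] _] ee ff; case: (sl e f ee ff). Qed.

Lemma plus_idem a : idempotent mul (plus a).
Proof. by case: S_ample => [[[_ [_ [spec _]]] _] _]; case: (spec a). Qed.

Lemma plus_Rstar a : Rstar mul a (plus a).
Proof. by case: S_ample => [[[_ [_ [spec _]]] _] _]; case: (spec a). Qed.

Lemma plus_uniq a e : idempotent mul e -> Rstar mul a e -> e = plus a.
Proof. by case: S_ample => [[[_ [_ [_ uniq]]] _] _]; apply: uniq. Qed.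

Lemma star_idem a : idempotent mul (star a).
Proof. by case: S_ample => [_ [[_ [_ [spec _]]] _]]; case: (spec a). Qed.

Lemma star_Lstar a : Lstar mul a (star a).
Proof. by case: S_ample => [_ [[_ [_ [spec _]]] _]]; case: (spec a). Qed.

Lemma star_uniq a e : idempotent mul e -> Lstar mul a e -> e = star a.
Proof. by case: S_ample => [_ [[_ [_ [_ uniq]]] _]]; apply: uniq. Qed.

Lemma left_ample_law a b : a ⋅ plus b = plus (a ⋅ b) ⋅ a.
Proof. by case: S_ample => [[_ law] _]. Qed.

Lemma right_ample_law a b : star b ⋅ a = a ⋅ star (b ⋅ a).
Proof. by case: S_ample => [_ [_ law]]. Qed.

Lemma eq_mul_plus a x y : x ⋅ a = y ⋅ a <-> x ⋅ plus a = y ⋅ plus a.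
Proof. exact: plus_Rstar a (Some x) (Some y). Qed.

Lemma fix_mul_plus a x : x ⋅ a = a <-> x ⋅ plus a = plus a.
Proof. exact: plus_Rstar a (Some x) None. Qed.

Lemma eq_star_mul a x y : a ⋅ x = a ⋅ y <-> star a ⋅ x = star a ⋅ y.
Proof. exact: star_Lstar a (Some x) (Some y). Qed.

Lemma fix_star_mul a x : a ⋅ x = a <-> star a ⋅ x = star a.
Proof. exact: star_Lstar a (Some x) None. Qed.

Lemma plus_mul a : plus a ⋅ a = a.
Proof. by apply/fix_mul_plus; apply: plus_idem. Qed.

Lemma mul_star a : a ⋅ star a = a.
Proof. by apply/fix_star_mul; apply: star_idem. Qed.

Lemma plus_of_idem e : idempotent mul e -> plus e = e.
Proof. by move=> ee; symmetry; apply: plus_uniq => // x y. Qed.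

Lemma star_of_idem e : idempotent mul e -> star e = e.
Proof. by move=> ee; symmetry; apply: star_uniq => // x y. Qed.

Lemma plus_mul_plus x a : plus (x ⋅ a) = plus (x ⋅ plus a).
Proof.
apply: plus_uniq; first exact: plus_idem.
move=> s t; rewrite -(plus_Rstar (x ⋅ a) s t).
by case: s t => [s|] [t|] /=; rewrite ?mulA; symmetry; apply: eq_mul_plus.
Qed.

Lemma star_star_mul a x : star (a ⋅ x) = star (star a ⋅ x).
Proof.
apply: star_uniq; first exact: star_idem.
move=> s t; rewrite -(star_Lstar (a ⋅ x) s t).
by case: s t => [s|] [t|] /=; rewrite -?mulA; symmetry; apply: eq_star_mul.
Qed.

Lemma plus_mul_eq x a b : plus a = plus b -> plus (x ⋅ a) = plus (x ⋅ b).
Proof. by move=> ab; rewrite plus_mul_plus ab -plus_mul_plus. Qed.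

Lemma plus_plus a : plus (plus a) = plus a.
Proof. exact: plus_of_idem (plus_idem a). Qed.

Lemma plus_mul_le a b : plus a ⋅ plus (a ⋅ b) = plus (a ⋅ b).
Proof. by apply/(fix_mul_plus (a ⋅ b)); rewrite mulA plus_mul. Qed.

Lemma star_mul_le a b : star (a ⋅ b) ⋅ star b = star (a ⋅ b).
Proof. by apply/(fix_star_mul (a ⋅ b)); rewrite -mulA mul_star. Qed.

Lemma eq_mul_transfer a b x y : plus a = plus b -> x ⋅ a = y ⋅ a -> x ⋅ b = y ⋅ b.
Proof. by move=> ab /eq_mul_plus; rewrite ab => /(eq_mul_plus b). Qed.

Lemma fix_of_plus_eq x z w : x ⋅ z = z -> plus w = plus z -> x ⋅ w = w.
Proof. by move=> /fix_mul_plus xz wz; apply/fix_mul_plus; rewrite wz. Qed.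

Lemma fix_mul_transfer p x a b : plus a = plus b -> p ⋅ (x ⋅ a) = x ⋅ a -> p ⋅ (x ⋅ b) = x ⋅ b.
Proof. by move=> ab /fix_of_plus_eq; apply; apply: plus_mul_eq. Qed.

Lemma star_mul_fixed u z : star u ⋅ z = z -> star (u ⋅ z) = star z.
Proof. by move=> uz; rewrite star_star_mul uz. Qed.

Lemma cancel_star u s t : u ⋅ s = u ⋅ t -> star u ⋅ s = s -> star u ⋅ t = t -> s = t.
Proof. by move=> /eq_star_mul st <- <-. Qed.

Lemma mul_idem_fixed v e : idempotent mul e -> plus (v ⋅ e) = plus v -> v ⋅ e = v.
Proof. by move=> ee ve; rewrite -{1}(plus_of_idem ee) left_ample_law ve plus_mul. Qed.

Lemma plus_idem_mul e z : idempotent mul e -> plus (e ⋅ z) ⋅ e = plus (e ⋅ z).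
Proof.
move=> ee; rewrite -(idem_comm ee (plus_idem _)).
by rewrite -{1}(plus_of_idem ee) plus_mul_le.
Qed.

Definition ore_pair b c u v :=
  u ⋅ b = v ⋅ c /\ plus u = plus v /\ plus v = plus (v ⋅ c) /\ b ⋅ star c = star u ⋅ b.

(* The pairs (a, b) and (c, d) represent the same fraction a⁻¹b = c⁻¹d. *)
Definition frac_equiv a b c d :=
  plus a = plus b /\ plus c = plus d /\ star a = star c /\
  forall x y, x ⋅ a = y ⋅ c -> x ⋅ b = y ⋅ d.

(* The idempotent (a⁻¹b) e (a⁻¹b)⁻¹ of the quotient, computed in S. *)
Definition frac_conj a b e := star (plus (b ⋅ e) ⋅ a).

Section Ore.
Hypothesis ore : forall b c, exists u v, ore_pair b c u v.

Lemma frac_equiv_refl a b : plus a = plus b -> frac_equiv a b a b.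
Proof. by move=> ab; do 3!split=> //; move=> x y; apply: eq_mul_transfer. Qed.

Lemma frac_equiv_sym a b c d : frac_equiv a b c d -> frac_equiv c d a b.
Proof.
by case=> ab [cd [ac graph]]; do 3!split=> //; move=> x y yc_xa; symmetry; apply: graph.
Qed.

Lemma frac_equiv_witness a b c d : frac_equiv a b c d ->
  exists u v, u ⋅ a = v ⋅ c /\ u ⋅ b = v ⋅ d /\ star u ⋅ a = a /\ star v ⋅ c = c.
Proof.
case=> _ [_ [ac graph]]; have [u [v [ua_vc [_ [_ ac_ua]]]]] := ore a c.
have ua : star u ⋅ a = a by rewrite -ac_ua -ac mul_star.
exists u, v; split=> //; split; first exact: graph ua_vc.
split=> //.
by rewrite right_ample_law -ua_vc (star_mul_fixed ua) ac mul_star.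
Qed.

Lemma frac_equiv_of_witness a b c d u v :
  plus a = plus b -> plus c = plus d -> u ⋅ a = v ⋅ c -> u ⋅ b = v ⋅ d ->
  star u ⋅ a = a -> star v ⋅ c = c -> frac_equiv a b c d.
Proof.
move=> ab cd ua_vc ub_vd ua vc; do 2!split=> //; split.
  by rewrite -(star_mul_fixed ua) -(star_mul_fixed vc) ua_vc.
move=> x y xa_yc; have [p [q [px_qu [_ [_ xu_px]]]]] := ore x u.
have pxa : star p ⋅ (x ⋅ a) = x ⋅ a by rewrite mulA -xu_px -mulA ua.
have pyc : p ⋅ y ⋅ c = q ⋅ v ⋅ c by rewrite -mulA -xa_yc mulA px_qu -mulA ua_vc mulA.
apply: (@cancel_star p).
- by rewrite mulA px_qu -mulA ub_vd mulA -(eq_mul_transfer cd pyc) mulA.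
- exact: fix_mul_transfer ab pxa.
- by apply: fix_mul_transfer cd _; rewrite -xa_yc.
Qed.

Lemma frac_equiv_trans a b c d e f :
  frac_equiv a b c d -> frac_equiv c d e f -> frac_equiv a b e f.
Proof.
move=> [ab [_ [ac graph1]]] [_ [ef [ce graph2]]]; do 2!split=> //.
split; first by rewrite ac.
move=> x y xa_ye; have [u [v [uxa_vc [_ [_ xac_uxa]]]]] := ore (x ⋅ a) c.
have uxa : star u ⋅ (x ⋅ a) = x ⋅ a by rewrite -xac_uxa -ac -mulA mul_star.
apply: (@cancel_star u).
- have uxb_vd : u ⋅ x ⋅ b = v ⋅ d by apply: graph1; rewrite -mulA.
  have vd_uyf : v ⋅ d = u ⋅ y ⋅ f by apply: graph2; rewrite -uxa_vc xa_ye mulA.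
  by rewrite !mulA uxb_vd vd_uyf.
- exact: fix_mul_transfer ab uxa.
- by apply: fix_mul_transfer ef _; rewrite -xa_ye.
Qed.

Lemma frac_equiv_swap a b c d : frac_equiv a b c d -> frac_equiv b a d c.
Proof.
move=> equiv; have [u [v [ua_vc [ub_vd [ua vc]]]]] := frac_equiv_witness equiv.
case: equiv => ab [cd _].
apply: (frac_equiv_of_witness (u := u) (v := v)) => //.
- exact: fix_of_plus_eq ua _.
- exact: fix_of_plus_eq vc _.
Qed.

Lemma frac_equiv_diag x y : star x = star y -> frac_equiv x x y y.
Proof. by move=> xy; do 3!split=> //. Qed.

Lemma plus_frac_mul a b c d u v : plus a = plus b -> plus c = plus d ->
  ore_pair b c u v -> plus (u ⋅ a) = plus (v ⋅ d).
Proof. by move=> ab cd [ub_vc _]; rewrite (plus_mul_eq u ab) ub_vc (plus_mul_eq v cd). Qed.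

Lemma star_frac_mul a b c u v : plus a = plus b -> ore_pair b c u v ->
  star (u ⋅ a) = frac_conj a b (star c).
Proof.
move=> ab [_ [_ [_ bc_ub]]].
rewrite /frac_conj star_star_mul -{1}(plus_mul a) ab mulA left_ample_law.
by rewrite (plus_idem_mul _ (star_idem u)) bc_ub.
Qed.

Lemma frac_conj_mul_l u a b e : star u ⋅ a = a ->
  frac_conj (u ⋅ a) (u ⋅ b) e = frac_conj a b e.
Proof.
move=> ua; rewrite /frac_conj.
have -> : plus (u ⋅ b ⋅ e) ⋅ (u ⋅ a) = u ⋅ (plus (b ⋅ e) ⋅ a)
  by rewrite (mulA u) left_ample_law !mulA.
by rewrite star_star_mul mulA (idem_comm (star_idem u) (plus_idem _)) -mulA ua.
Qed.

Lemma frac_conj_equiv a b c d e : frac_equiv a b c d -> frac_conj a b e = frac_conj c d e.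
Proof.
move=> /frac_equiv_witness [u [v [ua_vc [ub_vd [ua vc]]]]].
by rewrite -(frac_conj_mul_l b e ua) -(frac_conj_mul_l d e vc) ua_vc ub_vd.
Qed.

Lemma frac_conj_self a b : plus a = plus b -> frac_conj a b (star b) = star a.
Proof. by move=> ab; rewrite /frac_conj mul_star -ab plus_mul. Qed.

Lemma frac_conj_diag w e : idempotent mul e -> frac_conj w w e = star w ⋅ e.
Proof.
move=> ee; rewrite /frac_conj -left_ample_law (plus_of_idem ee) star_star_mul.
exact: star_of_idem (idem_mul (star_idem w) ee).
Qed.

Lemma frac_conj_mul a b c d u v e : plus c = plus d -> ore_pair b c u v ->
  frac_conj (u ⋅ a) (v ⋅ d) e = frac_conj a b (frac_conj c d e).
Proof.
move=> cd [ub_vc [_ [_ bc_ub]]]; rewrite /frac_conj.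
set g := plus (d ⋅ e); set k := plus (b ⋅ star (g ⋅ c)).
have gg : idempotent mul g by apply: plus_idem.
have c_gc : c ⋅ star (g ⋅ c) = g ⋅ c by rewrite -right_ample_law (star_of_idem gg).
have u_bgc : u ⋅ (b ⋅ star (g ⋅ c)) = v ⋅ g ⋅ c by rewrite mulA ub_vc -mulA c_gc mulA.
have vgc : plus (v ⋅ g ⋅ c) = plus (v ⋅ g).
  rewrite plus_mul_plus cd -mulA (idem_comm gg (plus_idem d)).
  by rewrite /g plus_mul_le.
have u_k : u ⋅ k = plus (v ⋅ g) ⋅ u by rewrite /k left_ample_law u_bgc vgc.
have uk : star u ⋅ k = k.
  apply/(fix_mul_plus (b ⋅ star (g ⋅ c))).
  by rewrite mulA -bc_ub -mulA (idem_comm (star_idem c) (star_idem _)) star_mul_le.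
rewrite -(mulA v) plus_mul_plus -/g.
by rewrite mulA -u_k -mulA star_star_mul mulA uk.
Qed.

Lemma frac_mul_equiv a b a' b' c d c' d' u v u' v' :
  frac_equiv a b a' b' -> frac_equiv c d c' d' ->
  ore_pair b c u v -> ore_pair b' c' u' v' ->
  frac_equiv (u ⋅ a) (v ⋅ d) (u' ⋅ a') (v' ⋅ d').
Proof.
move=> equiv_ab equiv_cd C C'.
case: (equiv_ab) => ab [ab' [_ graph_ab]]; case: (equiv_cd) => cd [cd' [cc' graph_cd]].
split; first exact: plus_frac_mul ab cd C.
split; first exact: plus_frac_mul ab' cd' C'.
split; first by rewrite (star_frac_mul ab C) (star_frac_mul ab' C') cc' (frac_conj_equiv _ equiv_ab).
case: C C' => [ub_vc _] [ub_vc' _] x y.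
by rewrite !mulA => /graph_ab; rewrite -!mulA ub_vc ub_vc' !mulA => /graph_cd.
Qed.

Lemma frac_mul_assoc a b c d e f u v u' v' s t s' t' :
  plus a = plus b -> plus c = plus d -> plus e = plus f ->
  ore_pair b c u v -> ore_pair (v ⋅ d) e u' v' ->
  ore_pair d e s t -> ore_pair b (s ⋅ c) s' t' ->
  frac_equiv (u' ⋅ (u ⋅ a)) (v' ⋅ f) (s' ⋅ a) (t' ⋅ (t ⋅ f)).
Proof.
move=> ab cd ef C1 C2 C3 C4.
have uavd := plus_frac_mul ab cd C1; have sctf := plus_frac_mul cd ef C3.
split; first exact: plus_frac_mul uavd ef C2.
split; first exact: plus_frac_mul ab sctf C4.
split.
  rewrite (star_frac_mul uavd C2) (star_frac_mul ab C4) (star_frac_mul cd C3).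
  exact: frac_conj_mul _ _ cd C1.
case: C1 C2 C3 C4 => [ub_vc _] [uvd_ve _] [sd_te _] [sb_tsc _] x y.
rewrite !mulA => /(eq_mul_transfer ab); rewrite -!mulA ub_vc sb_tsc !mulA.
move=> /(eq_mul_transfer cd); rewrite -!mulA uvd_ve sd_te !mulA.
exact: eq_mul_transfer ef.
Qed.

Lemma frac_mul_inverse a b u v u' v' : plus a = plus b ->
  ore_pair b b u v -> ore_pair (v ⋅ a) a u' v' ->
  frac_equiv (u' ⋅ (u ⋅ a)) (v' ⋅ b) a b.
Proof.
move=> ab C1 C2; have ba : plus b = plus a by [].
have ua_va : u ⋅ a = v ⋅ a by case: C1 => ub_vb _; apply: eq_mul_transfer ub_vb.
have uava := plus_frac_mul ab ba C1.
split; first exact: plus_frac_mul uava ab C2.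
split=> //; split.
  by rewrite (star_frac_mul uava C2) (frac_conj_mul _ _ ba C1) frac_conj_self // frac_conj_self.
case: C2 => [uva_va _] x y.
by rewrite ua_va uva_va !mulA => /(eq_mul_transfer ab).
Qed.

Lemma frac_idem_diag a b u v : plus a = plus b -> ore_pair b a u v ->
  frac_equiv (u ⋅ a) (v ⋅ b) a b -> a = b.
Proof.
move=> ab [ub_va [_ [v_va _]]] [_ [_ [uaa graph]]].
have ua : star u ⋅ a = a by rewrite right_ample_law uaa mul_star.
have ub : star u ⋅ b = b by apply: fix_of_plus_eq ua _.
have vb_va : v ⋅ b = v ⋅ a.
  have vb : v ⋅ b = plus (v ⋅ b) ⋅ u ⋅ b.
    by rewrite -{1}(plus_mul (v ⋅ b)); apply: graph; rewrite mulA.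
  by rewrite vb -mulA ub_va (plus_mul_eq v (eq_sym ab)) plus_mul.
have v_pa : v ⋅ plus a = v.
  by apply: mul_idem_fixed (plus_idem a) _; rewrite -plus_mul_plus.
have vpa_upa : v ⋅ plus a = u ⋅ plus a.
  by rewrite ab; apply/(eq_mul_plus b); rewrite ub_va vb_va.
have ub_ua : u ⋅ b = u ⋅ a by rewrite ub_va -{1}v_pa vpa_upa -mulA plus_mul.
by move/eq_star_mul: ub_ua; rewrite ua ub => ->.
Qed.

Lemma frac_diag_comm w z u v u' v' : ore_pair w z u v -> ore_pair z w u' v' ->
  frac_equiv (u ⋅ w) (v ⋅ z) (u' ⋅ z) (v' ⋅ w).
Proof.
move=> C C'; have [uw_vz _] := C; have [uz_vw _] := C'.
rewrite -uw_vz -uz_vw; apply: frac_equiv_diag.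
rewrite (star_frac_mul (eq_refl (plus w)) C) (star_frac_mul (eq_refl (plus z)) C').
rewrite (frac_conj_diag w (star_idem z)) (frac_conj_diag z (star_idem w)).
exact: idem_comm (star_idem w) (star_idem z).
Qed.

Lemma ore_pair_exists b c : exists p : S * S, ore_pair b c (fst p) (snd p).
Proof. by have [u [v C]] := ore b c; exists (u, v). Qed.

Definition ore_mul b c : S * S :=
  proj1_sig (constructive_indefinite_description _ (ore_pair_exists b c)).

Lemma ore_mulP b c : ore_pair b c (fst (ore_mul b c)) (snd (ore_mul b c)).
Proof. exact: proj2_sig (constructive_indefinite_description _ (ore_pair_exists b c)). Qed.

Definition frac_rel (p q : S * S) := frac_equiv (fst p) (snd p) (fst q) (snd q).

(* (a⁻¹b)(c⁻¹d) = (ua)⁻¹(vd) for the chosen Ore pair ub = vc. *)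
Definition frac_mul (p q : S * S) : S * S :=
  (fst (ore_mul (snd p) (fst q)) ⋅ fst p, snd (ore_mul (snd p) (fst q)) ⋅ snd q).

Definition frac_inv (p : S * S) : S * S := (snd p, fst p).

Lemma frac_rel_sym p q : frac_rel p q -> frac_rel q p.
Proof. exact: frac_equiv_sym. Qed.

Lemma frac_rel_trans p q r : frac_rel p q -> frac_rel q r -> frac_rel p r.
Proof. exact: frac_equiv_trans. Qed.

Lemma frac_inv_compat p q : frac_rel p q -> frac_rel (frac_inv p) (frac_inv q).
Proof. exact: frac_equiv_swap. Qed.

Lemma frac_mul_compat p p' q q' :
  frac_rel p p' -> frac_rel q q' -> frac_rel (frac_mul p q) (frac_mul p' q').
Proof. by move=> pp' qq'; apply: frac_mul_equiv pp' qq' (ore_mulP _ _) (ore_mulP _ _). Qed.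

Definition Q := per_quot frac_rel.
Definition Qmul : Q -> Q -> Q := quot_lift2 frac_mul_compat.
Definition Qinv : Q -> Q := quot_lift1 frac_inv_compat.

Lemma Qclass_eq p q (pp : frac_rel p p) (qq : frac_rel q q) :
  frac_rel p q -> pclass pp = pclass qq.
Proof. exact: (pclass_eq frac_rel_sym frac_rel_trans pp qq). Qed.

Lemma Qmul_class p q (pp : frac_rel p p) (qq : frac_rel q q) :
  Qmul (pclass pp) (pclass qq) = pclass (frac_mul_compat pp qq).
Proof. exact: (quot_lift2_pclass frac_rel_sym frac_rel_trans frac_mul_compat pp qq). Qed.

Lemma Qinv_class p (pp : frac_rel p p) : Qinv (pclass pp) = pclass (frac_inv_compat pp).
Proof. exact: (quot_lift1_pclass frac_rel_sym frac_rel_trans frac_inv_compat pp). Qed.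

Lemma frac_mulE a b c d :
  exists u v, ore_pair b c u v /\ frac_mul (a, b) (c, d) = (u ⋅ a, v ⋅ d).
Proof. by exists (fst (ore_mul b c)), (snd (ore_mul b c)); split; first apply: ore_mulP. Qed.

Lemma QmulA : associative_op Qmul.
Proof.
move=> q1 q2 q3.
have [[a b] [p1 ->]] := pclass_surj q1; have [[c d] [p2 ->]] := pclass_surj q2.
have [[e f] [p3 ->]] := pclass_surj q3.
rewrite !Qmul_class; apply: Qclass_eq; apply: frac_rel_sym.
have [s [t [C3 ->]]] := frac_mulE c d e f.
have [s' [t' [C4 ->]]] := frac_mulE a b (s ⋅ c) (t ⋅ f).
have [u [v [C1 ->]]] := frac_mulE a b c d.
have [u' [v' [C2 ->]]] := frac_mulE (u ⋅ a) (v ⋅ d) e f.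
case: p1 p2 p3 => [ab _] [cd _] [ef _].
exact: frac_mul_assoc ab cd ef C1 C2 C3 C4.
Qed.

Lemma Qinv_is_inverse q : is_inverse Qmul q (Qinv q).
Proof.
have [[a b] [ab_ab ->]] := pclass_surj q; have /= [ab _] := ab_ab.
rewrite /is_inverse Qinv_class !Qmul_class; split; apply: Qclass_eq.
- have [u [v [C1 ->]]] := frac_mulE a b b a.
  have [u' [v' [C2 ->]]] := frac_mulE (u ⋅ a) (v ⋅ a) a b.
  exact: frac_mul_inverse ab C1 C2.
- have [u [v [C1 ->]]] := frac_mulE b a a b.
  have [u' [v' [C2 ->]]] := frac_mulE (u ⋅ b) (v ⋅ b) b a.
  exact: frac_mul_inverse (eq_sym ab) C1 C2.
Qed.

Lemma Qidem_comm e f : idempotent Qmul e -> idempotent Qmul f -> Qmul e f = Qmul f e.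
Proof.
have diag (q : Q) : idempotent Qmul q -> exists a (aa : frac_rel (a, a) (a, a)), q = pclass aa.
{ have [[a b] [ab_ab ->]] := pclass_surj q; have /= [ab _] := ab_ab.
  rewrite /idempotent Qmul_class => idem_class; have := pclass_inj idem_class.
  have [u [v [C ->]]] := frac_mulE a b a b.
  move=> /(frac_idem_diag ab C) /= a_b.
  by subst b; exists a, ab_ab. }
move=> /diag [a [aa ->]] /diag [c [cc ->]].
rewrite !Qmul_class; apply: Qclass_eq.
have [u [v [C ->]]] := frac_mulE a a c c; have [u' [v' [C' ->]]] := frac_mulE c c a a.
exact: frac_diag_comm C C'.
Qed.

Lemma Q_inverse_semigroup : inverse_semigroup Qmul Qinv.
Proof. exact: inverse_semigroup_of_idem_comm QmulA Qinv_is_inverse Qidem_comm. Qed.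

Definition embed (a : S) : Q :=
  pclass (frac_equiv_refl (plus_plus a) : frac_rel (plus a, a) (plus a, a)).

Lemma embed_inj a b : embed a = embed b -> a = b.
Proof.
move=> ab; have [_ [_ [pa_pb graph]]] := pclass_inj ab.
rewrite /= !(star_of_idem (plus_idem _)) in pa_pb.
by move: (graph (plus a) (plus a)) => /=; rewrite plus_mul pa_pb plus_mul; apply.
Qed.

Lemma embed_mul a b : embed (a ⋅ b) = Qmul (embed a) (embed b).
Proof.
rewrite Qmul_class; apply: Qclass_eq; apply: frac_rel_sym.
have [u [v [C ->]]] := frac_mulE (plus a) a (plus b) b.
split; first exact: plus_frac_mul (plus_plus a) (plus_plus b) C.
split; first exact: plus_plus.
split.
  rewrite (star_frac_mul (plus_plus a) C) /frac_conj (star_of_idem (plus_idem b)).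
  by rewrite -plus_mul_plus -(idem_comm (plus_idem a) (plus_idem _)) plus_mul_le.
move=> x y /= xupa; have [ua_vpb _] := C.
have : x ⋅ (u ⋅ a) = y ⋅ (a ⋅ plus b).
  by rewrite -{1}(plus_mul a) (mulA u) (mulA x) xupa -mulA left_ample_law.
by rewrite ua_vpb !mulA => /(eq_mul_plus b).
Qed.

Lemma embed_plus a : embed (plus a) = Qmul (embed a) (Qinv (embed a)).
Proof.
rewrite Qinv_class Qmul_class; apply: Qclass_eq; apply: frac_rel_sym.
have [u [v [C ->]]] := frac_mulE (plus a) a a (plus a).
have [ua_va _] := C; move/eq_mul_plus: ua_va => <-; rewrite /frac_rel /= plus_plus.
apply: frac_equiv_diag.
by rewrite (star_frac_mul (plus_plus a) C) frac_conj_self ?plus_plus.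
Qed.

Lemma embed_star a : embed (star a) = Qmul (Qinv (embed a)) (embed a).
Proof.
rewrite Qinv_class Qmul_class; apply: Qclass_eq; apply: frac_rel_sym.
have [u [v [C ->]]] := frac_mulE a (plus a) (plus a) a.
have [ua_va _] := C; move/(eq_mul_plus a): ua_va => <-.
rewrite /frac_rel /= (plus_of_idem (star_idem a)); apply: frac_equiv_diag.
rewrite (star_frac_mul (eq_sym (plus_plus a)) C) (star_of_idem (star_idem a)).
by rewrite frac_conj_self // plus_plus.
Qed.

Lemma embed_left_Iorder q : exists a b, q = Qmul (Qinv (embed a)) (embed b).
Proof.
have [[a b] [ab_ab ->]] := pclass_surj q; have /= [ab _] := ab_ab.
exists a, b; rewrite Qinv_class Qmul_class; apply: Qclass_eq; apply: frac_rel_sym.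
have [u [v [C ->]]] := frac_mulE a (plus a) (plus b) b.
split; first exact: plus_frac_mul (eq_sym (plus_plus a)) (plus_plus b) C.
split=> //; split.
  by rewrite (star_frac_mul (eq_sym (plus_plus a)) C) -ab frac_conj_self // plus_plus.
have [upa_vpb _] := C; rewrite -ab in upa_vpb; move/(eq_mul_plus a): upa_vpb => ->.
by move=> x y; rewrite mulA => /(eq_mul_transfer ab); rewrite mulA.
Qed.

Theorem biunary_left_Iquotients_of_ore : has_biunary_left_Iquotients mul plus star.
Proof.
exists Q, Qmul, Qinv, embed; split; first exact: Q_inverse_semigroup.
split; first exact: embed_inj.
split; first exact: embed_mul.
split; first exact: embed_left_Iorder.
by split; [apply: embed_plus | apply: embed_star].
Qed.

End Ore.
End Ample.

Lemma ore_of_biunary_left_Iquotients (S : Type) (mul : S -> S -> S) (plus star : S -> S) :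
  has_biunary_left_Iquotients mul plus star ->
  forall b c, exists u v, ore_pair mul plus star b c u v.
Proof.
move=> [Q [mulQ [invQ [f [Qinv [f_inj [f_mul [Iorder [f_plus f_star]]]]]]]]] b c.
have [a [d ad]] := Iorder (mulQ (f b) (invQ (f c))).
have [balance plus_eq] := balanced_fraction Qinv (f a) (f d).
have fu : f (mul (plus d) a) = mulQ (mulQ (f d) (invQ (f d))) (f a) by rewrite f_mul f_plus.
have fv : f (mul (plus a) d) = mulQ (mulQ (f a) (invQ (f a))) (f d) by rewrite f_mul f_plus.
rewrite -fu -fv -ad in balance; rewrite -fu -fv in plus_eq.
have [ub_vc [vv star_eq]] := ore_pair_of_fraction Qinv balance plus_eq.
exists (mul (plus d) a), (mul (plus a) d).
split; first by apply: f_inj; rewrite (f_mul _ b) (f_mul _ c).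
split; first by apply: f_inj; rewrite !f_plus.
split; first by apply: f_inj; rewrite !f_plus (f_mul _ c).
by apply: f_inj; rewrite f_mul (f_mul (star _)) !f_star.
Qed.

Theorem corollary4p8 (S : Type) (mul : S -> S -> S) (plus star : S -> S)
  (Hample : ample mul plus star) :
  has_biunary_left_Iquotients mul plus star <->
  (forall b c : S, exists u v : S,
     mul u b = mul v c /\
     plus u = plus v /\ plus v = plus (mul v c) /\
     mul b (star c) = mul (star u) b).
Proof.
split; first exact: ore_of_biunary_left_Iquotients.
exact: biunary_left_Iquotients_of_ore.
Qed.
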